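(* Let $V$ be a finite set, $\lambda\in\mathbb{C}$, and $A\subseteq V$ with $|A|\ge2$. Then $\big(f_A^{(\lambda)}\big)^2=0$.
   Context: For each $i\in V$ let $\psi_i,\bar\psi_i$ be anticommuting generators of a Grassmann algebra over $\mathbb{C}$. For $A\subseteq V$, $\tau_A=\prod_{i\in A}\bar\psi_i\psi_i$ ($\tau_\emptyset=1$), and $f_A^{(\lambda)}=\lambda(1-|A|)\tau_A+\sum_{i\in A}\tau_{A\setminus\{i\}}-\sum_{i,j\in A,\ i\neq j}\bar\psi_i\psi_j\,\tau_{A\setminus\{i,j\}}$. *)

From HB Require Import structures.
From mathcomp Require Import all_boot all_order all_algebra.
From mathcomp Require Import complex reals.
Set Implicit Arguments. Unset Strict Implicit. Unset Printing Implicit Defensive.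
Import Order.TTheory GRing.Theory Num.Theory.
Local Open Scope ring_scope.

Section Grassmann.
Variables (R : realType) (V : finType) (A : algType R[i]).
Variables (psi psibar : V -> A).

Definition grass_gen (g : bool * V) : A := if g.1 then psibar g.2 else psi g.2.

Definition grass_monomial (S : {set bool * V}) : A :=
  \prod_(g <- enum S) grass_gen g.

(* A is the Grassmann algebra over C generated by the psi_i, psibar_i:
   the generators pairwise anticommute, and the ordered monomials in
   distinct generators form a C-basis of A. *)
Definition is_grassmann_algebra : Prop :=
  [/\ forall g h : bool * V, grass_gen g * grass_gen h = - (grass_gen h * grass_gen g),
      forall c : {ffun {set bool * V} -> R[i]},
        \sum_(S : {set bool * V}) c S *: grass_monomial S = 0 -> c = 0
    & forall a : A, exists c : {ffun {set bool * V} -> R[i]},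
        a = \sum_(S : {set bool * V}) c S *: grass_monomial S].

Definition tau (B : {set V}) : A := \prod_(i in B) (psibar i * psi i).

Definition fA (lam : R[i]) (B : {set V}) : A :=
  (lam * (1 - (#|B|)%:R)) *: tau B
  + \sum_(i in B) tau (B :\ i)
  - \sum_(i in B) \sum_(j in B | j != i) (psibar i * psi j * tau (B :\ i :\ j)).

End Grassmann.

From Pilot Require Import Defs.
From HB Require Import structures.
From mathcomp Require Import all_boot all_order all_algebra.
From mathcomp Require Import complex reals.
Set Implicit Arguments. Unset Strict Implicit. Unset Printing Implicit Defensive.
Import Order.TTheory GRing.Theory Num.Theory.
Local Open Scope ring_scope.

(* Write a_k = psibar_k psi_k ([pair k] below).  Being a product of two anticommuting
   generators, a_k commutes with every generator, hence is central, and
   a_k psi_k = a_k psibar_k = 0.  So two elements, one with a factor a_k and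
   the other with a factor psi_k or psibar_k, multiply to 0 in either order.
   Expanding f^2 with f = c tau_A + v - w (v the sum of the tau_(A\i), w the
   sum of the psibar_i psi_j tau_(A\{i,j})), every product except v^2 and w^2
   dies this way.  If |A| >= 3, some k in A lies outside the (at most four)
   indices named by two terms, so v^2 = w^2 = 0 as well; if A = {p, q} one
   computes v^2 = 2 a_p a_q = - w^2. *)

Lemma self_opp_eq0 (F : numFieldType) (M : lmodType F) (x : M) : x = - x -> x = 0.
Proof.
move=> xN; have : (2 : F) *: x == 0 by rewrite scaler_nat mulr2n {1}xN addNr.
by rewrite scaler_eq0 pnatr_eq0 => /eqP.
Qed.

Lemma commr_anticomm_mul (T : pzRingType) (x y z : T) :
  x * z = - (z * x) -> y * z = - (z * y) -> GRing.comm (x * y) z.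
Proof. by move=> xz yz; rewrite /GRing.comm -mulrA yz mulrN mulrA xz mulNr opprK mulrA. Qed.

Lemma exists_notin_card (T : finType) (B C : {set T}) :
  (#|C| < #|B|)%N -> exists2 m, m \in B & m \notin C.
Proof.
move=> ltCB; apply/subsetPn/negP => /subset_leq_card.
by rewrite leqNgt ltCB.
Qed.

Lemma exists_notin_set2 (T : finType) (B : {set T}) i j :
  (2 < #|B|)%N -> exists2 m, m \in B & (m != i) && (m != j).
Proof.
move=> B_gt2; have [m mB] : exists2 m, m \in B & m \notin [set i; j].
  by apply: exists_notin_card; rewrite cards2 (leq_ltn_trans _ B_gt2) // ltnS leq_b1.
by rewrite !inE negb_or; exists m.
Qed.

Section GrassmannSquare.
Variables (R : realType) (V : finType) (A : algType R[i]) (psi psibar : V -> A).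
Local Notation gen := (grass_gen psi psibar).
Local Notation tau := (tau psi psibar).

Hypothesis gen_anticomm : forall g h, gen g * gen h = - (gen h * gen g).
Hypothesis monomial_span : forall a : A, exists c : {ffun {set bool * V} -> R[i]},
  a = \sum_(S : {set bool * V}) c S *: grass_monomial psi psibar S.

(* Locked, so that ring rewrites such as [mulrA] cannot see through it. *)
Fact pair_key : unit. Proof. by []. Qed.
Definition pair k : A := locked_with pair_key (psibar k * psi k).
Lemma pairE k : pair k = psibar k * psi k. Proof. by rewrite /pair unlock. Qed.

Lemma psi_sqr k : psi k * psi k = 0.
Proof. exact: self_opp_eq0 (gen_anticomm (false, k) (false, k)). Qed.

Lemma psibar_sqr k : psibar k * psibar k = 0.
Proof. exact: self_opp_eq0 (gen_anticomm (true, k) (true, k)). Qed.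

Lemma pair_comm_gen k g : GRing.comm (pair k) (gen g).
Proof.
rewrite pairE.
exact: commr_anticomm_mul (gen_anticomm (true, k) g) (gen_anticomm (false, k) g).
Qed.

Lemma pair_central k (x : A) : GRing.comm (pair k) x.
Proof.
have [c ->] := monomial_span x; apply: commr_sum => S _.
rewrite /GRing.comm -scalerAr -scalerAl; congr (_ *: _).
exact/commr_prod/(fun g _ => pair_comm_gen k g).
Qed.

Lemma pair_mul_psi k : pair k * psi k = 0.
Proof. by rewrite pairE -mulrA psi_sqr mulr0. Qed.

Lemma pair_mul_psibar k : pair k * psibar k = 0.
Proof.
rewrite pairE -mulrA (gen_anticomm (false, k) (true, k)) /=.
by rewrite mulrN mulrA psibar_sqr mul0r oppr0.
Qed.

Lemma pair_sqr k : pair k * pair k = 0.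
Proof. by rewrite {2}pairE mulrA pair_mul_psibar mul0r. Qed.

Definition has_pair k (x : A) := exists y, x = pair k * y.

Definition has_gen k (x : A) :=
  exists y z, x = y * psi k * z \/ x = y * psibar k * z.

Definition annihilate (x y : A) := x * y = 0 /\ y * x = 0.

Lemma has_pair_mull k x y : has_pair k y -> has_pair k (x * y).
Proof. by move=> [z ->]; exists (x * z); rewrite mulrA -pair_central mulrA. Qed.

Lemma has_pair_gen k x : has_pair k x -> has_gen k x.
Proof. by move=> [y ->]; exists 1, (psi k * y); right; rewrite pairE mul1r mulrA. Qed.

Lemma pair_gen_annihilate k x y : has_pair k x -> has_gen k y -> annihilate x y.
Proof.
move=> [u ->] [y1 [y2 Ey]].
have [g [-> pg0]] : exists g, y = y1 * g * y2 /\ pair k * g = 0.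
  by case: Ey => ->; eexists; split; [| exact: pair_mul_psi | | exact: pair_mul_psibar].
have pgN : g * pair k = 0 by rewrite -pair_central.
split.
- by rewrite !mulrA -(mulrA (pair k)) pair_central -(mulrA (u * y1)) pg0 mulr0 !mul0r.
- by rewrite !mulrA -(mulrA _ y2) -pair_central mulrA -(mulrA y1) pgN mulr0 !mul0r.
Qed.

Lemma pair_pair_annihilate k x y : has_pair k x -> has_pair k y -> annihilate x y.
Proof. by move=> kx /has_pair_gen; apply: pair_gen_annihilate. Qed.

Lemma annihilate_sym x y : annihilate x y -> annihilate y x.
Proof. by case. Qed.

Lemma annihilate_sumr (I : finType) (P : pred I) (F : I -> A) x :
  (forall i, P i -> annihilate x (F i)) -> annihilate x (\sum_(i | P i) F i).
Proof.
move=> xF; split; [rewrite mulr_sumr | rewrite mulr_suml];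
  by apply: big1 => i /xF [].
Qed.

Lemma annihilate_suml (I : finType) (P : pred I) (F : I -> A) x :
  (forall i, P i -> annihilate (F i) x) -> annihilate (\sum_(i | P i) F i) x.
Proof.
by move=> Fx; apply/annihilate_sym/annihilate_sumr => i /Fx /annihilate_sym.
Qed.

Lemma annihilateZl c x y : annihilate x y -> annihilate (c *: x) y.
Proof. by case=> xy yx; split; [rewrite -scalerAl xy | rewrite -scalerAr yx]; rewrite scaler0. Qed.

Lemma tau_has_pair k (C : {set V}) : k \in C -> has_pair k (tau C).
Proof.
move=> kC; rewrite /Defs.tau -big_filter.
have : k \in [seq i <- index_enum V | i \in C] by rewrite mem_filter kC mem_index_enum.
elim: [seq i <- _ | _] => // l s IH; rewrite inE big_cons.
case/orP => [/eqP <- | /IH]; last exact: has_pair_mull.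
by exists (\prod_(j <- s) (psibar j * psi j)); rewrite pairE.
Qed.

Definition hop (B : {set V}) i j : A := psibar i * psi j * tau (B :\ i :\ j).

Lemma hop_has_gen_l (B : {set V}) i j : has_gen i (hop B i j).
Proof. by exists 1, (psi j * tau (B :\ i :\ j)); right; rewrite mul1r mulrA. Qed.

Lemma hop_has_gen_r (B : {set V}) i j : has_gen j (hop B i j).
Proof. by exists (psibar i), (tau (B :\ i :\ j)); left. Qed.

Lemma hop_has_pair (B : {set V}) i j k : k \in B -> k != i -> k != j -> has_pair k (hop B i j).
Proof. by move=> kB ki kj; apply/has_pair_mull/tau_has_pair; rewrite !inE ki kj. Qed.

Definition vsum (B : {set V}) : A := \sum_(i in B) tau (B :\ i).

Definition wsum (B : {set V}) : A := \sum_(i in B) \sum_(j in B :\ i) hop B i j.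

Lemma fAE lam (B : {set V}) :
  fA psi psibar lam B = (lam * (1 - #|B|%:R)) *: tau B + vsum B - wsum B.
Proof.
congr (_ - _); apply: eq_bigr => i _.
by apply: eq_bigl => j; rewrite in_setD1 andbC.
Qed.

Lemma tau_annihilate_vsum (B : {set V}) : (1 < #|B|)%N -> annihilate (tau B) (vsum B).
Proof.
move=> B_gt1; apply: annihilate_sumr => i _.
have [k kB] : exists2 k, k \in B & k \notin [set i] by apply: exists_notin_card; rewrite cards1.
rewrite inE => ki; apply: (pair_pair_annihilate (k := k)); apply: tau_has_pair => //.
by rewrite !inE ki.
Qed.

Lemma tau_annihilate_wsum (B : {set V}) : annihilate (tau B) (wsum B).
Proof.
apply: annihilate_sumr => i iB; apply: annihilate_sumr => j _.
exact: pair_gen_annihilate (tau_has_pair iB) (hop_has_gen_l B i j).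
Qed.

Lemma vsum_annihilate_wsum (B : {set V}) : annihilate (vsum B) (wsum B).
Proof.
apply: annihilate_suml => i iB; apply: annihilate_sumr => k kB.
apply: annihilate_sumr => l; rewrite !inE => /andP [lk lB].
have [<- | ki] := eqVneq k i.
  by apply: pair_gen_annihilate (hop_has_gen_r _ _ _); apply: tau_has_pair; rewrite !inE lk lB.
by apply: pair_gen_annihilate (hop_has_gen_l _ _ _); apply: tau_has_pair; rewrite !inE ki kB.
Qed.

Lemma fA_sqr lam (B : {set V}) : (1 < #|B|)%N ->
  fA psi psibar lam B * fA psi psibar lam B = vsum B * vsum B + wsum B * wsum B.
Proof.
move=> B_gt1; rewrite fAE; set c := lam * _.
have [k kB] : exists2 k, k \in B & k \notin set0 by apply: exists_notin_card; rewrite cards0 ltnW.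
have [uu _] := annihilateZl c (annihilate_sym (annihilateZl c
  (pair_pair_annihilate (tau_has_pair kB) (tau_has_pair kB)))).
have [uv vu] := annihilateZl c (tau_annihilate_vsum B_gt1).
have [uw wu] := annihilateZl c (tau_annihilate_wsum B).
have [vw wv] := vsum_annihilate_wsum B.
rewrite mulrBl !mulrDl !mulrBr !mulrDr uu uv vu uw wu vw wv.
by rewrite !(addr0, add0r, subr0, sub0r, opprK).
Qed.

Lemma vsum_annihilate_vsum (B : {set V}) : (2 < #|B|)%N -> annihilate (vsum B) (vsum B).
Proof.
move=> B_gt2; apply: annihilate_suml => i _; apply: annihilate_sumr => k _.
have [m mB /andP [mi mk]] := exists_notin_set2 i k B_gt2.
by apply: (pair_pair_annihilate (k := m)); apply: tau_has_pair; rewrite !inE ?mi ?mk mB.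
Qed.

Lemma wsum_annihilate_wsum (B : {set V}) : (2 < #|B|)%N -> annihilate (wsum B) (wsum B).
Proof.
move=> B_gt2; apply: annihilate_suml => i iB; apply: annihilate_suml => j.
rewrite in_setD1 => /andP [ji jB]; apply: annihilate_sumr => k kB.
apply: annihilate_sumr => l; rewrite in_setD1 => /andP [lk lB].
have [m mB /andP [mi mj]] := exists_notin_set2 i j B_gt2.
have [/andP [ki kj] | kij] := boolP ((k != i) && (k != j)).
  exact: pair_gen_annihilate (hop_has_pair kB ki kj) (hop_has_gen_l B k l).
have [/andP [li lj] | lij] := boolP ((l != i) && (l != j)).
  exact: pair_gen_annihilate (hop_has_pair lB li lj) (hop_has_gen_r B k l).
have mk : m != k by apply: contraNneq kij => <-; rewrite mi mj.
have ml : m != l by apply: contraNneq lij => <-; rewrite mi mj.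
exact: pair_pair_annihilate (hop_has_pair mB mi mj) (hop_has_pair mB mk ml).
Qed.

Lemma psibar_psi_sqr i j : psibar i * psi j * (psibar i * psi j) = 0.
Proof.
rewrite -mulrA (mulrA (psi j)) (gen_anticomm (false, j) (true, i)) /=.
by rewrite mulNr -mulrA psi_sqr mulr0 oppr0 mulr0.
Qed.

Lemma psibar_psi_mul_swap i j : psibar i * psi j * (psibar j * psi i) = - (pair j * pair i).
Proof.
rewrite -mulrA (mulrA (psi j)) (gen_anticomm (false, j) (true, j)) /= -pairE.
by rewrite mulNr mulrN mulrA -(pair_central j) -mulrA -pairE.
Qed.

Lemma tau_set1 k : tau [set k] = pair k.
Proof. by rewrite /Defs.tau big_set1 pairE. Qed.

Lemma vsum_wsum_set2 p q : p != q ->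
  vsum [set p; q] * vsum [set p; q] + wsum [set p; q] * wsum [set p; q] = 0.
Proof.
move=> pq; set B := [set p; q].
have Bp : B :\ p = [set q] by rewrite setU1K // inE.
have Bq : B :\ q = [set p] by rewrite /B setUC setU1K // inE eq_sym.
have sumB (F : V -> A) : \sum_(i in B) F i = F p + F q.
  by rewrite big_setU1 ?inE //= big_set1.
have hopB i j : B :\ i = [set j] -> hop B i j = psibar i * psi j.
  by move=> Bi; rewrite /hop Bi setDv /Defs.tau big_set0 mulr1.
rewrite /vsum /wsum !sumB Bp Bq !big_set1 !tau_set1 (hopB _ _ Bp) (hopB _ _ Bq).
rewrite !mulrDl !mulrDr !pair_sqr !psibar_psi_sqr !psibar_psi_mul_swap.
by rewrite !(addr0, add0r) (pair_central p) -opprD subrr.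
Qed.

End GrassmannSquare.

Theorem corollary4p2 (R : realType) (V : finType) (A : algType R[i])
    (psi psibar : V -> A) (lam : R[i]) (B : {set V}) :
  is_grassmann_algebra psi psibar ->
  (2 <= #|B|)%N ->
  fA psi psibar lam B * fA psi psibar lam B = 0.
Proof.
move=> [anticomm _ span] B_ge2; rewrite fA_sqr //.
case: (ltngtP 2 #|B|) => [B_gt2 | | B_eq2]; last first.
- have /cards2P [p [q [pq ->]]] : #|B| == 2 by rewrite -B_eq2.
  exact: vsum_wsum_set2.
- by rewrite ltnNge B_ge2.
have [-> _] := vsum_annihilate_vsum anticomm span B_gt2.
by have [-> _] := wsum_annihilate_wsum anticomm span B_gt2; rewrite addr0.
Qed.
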